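(* Let $K$ be a field of characteristic $\neq 2$ and let $\mathcal C$ be a 3-dimensional EACP over $K$ (natural basis $\{h_1,h_2,r\}$) with $\dim\mathcal C^2=1$. Then $\mathcal C$ is isomorphic to one of the following pairwise non-isomorphic algebras with basis $\{h_1,h_2,r\}$, in each of which $rh_i=h_ir$ ($i=1,2$) and all products not listed are zero: $\mathcal C_1$: $h_1r=r$; $\mathcal C_2$: $h_1r=h_2$; $\mathcal C_3$: $h_1r=h_1+r$.
   Context: An EACP over a field $K$ (characteristic $\neq 2$) is a $K$-algebra $\mathcal C$ with a basis $\{h_1,\dots,h_n,r\}$ (called a natural basis) whose multiplication is determined by bilinearity from $$h_ir=rh_i=\tfrac12\Big(\sum_{j=1}^n a_{ij}h_j+b_ir\Big),\qquad h_ih_j=0\ (i,j=1,\dots,n),\qquad rr=0,$$ for some constants $a_{ij},b_i\in K$. $\mathcal C^2$ denotes the span of all products $xy$, $x,y\in\mathcal C$. Isomorphism means algebra isomorphism. *)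

From HB Require Import structures.
From mathcomp Require Import all_boot all_order all_algebra.
Set Implicit Arguments. Unset Strict Implicit. Unset Printing Implicit Defensive.
Import GRing.Theory.
Local Open Scope ring_scope.

(* A finite-dimensional K-algebra on K^n (row vectors) given by structure
   constants: c i j = e_i * e_j, where e_k is the k-th standard basis vector. *)
Definition strc (K : fieldType) (n : nat) := 'I_n -> 'I_n -> 'rV[K]_n.

Definition ebasis {K : fieldType} {n : nat} (k : 'I_n) : 'rV[K]_n := delta_mx 0 k.

Definition mulS (K : fieldType) (n : nat) (c : strc K n) (u v : 'rV[K]_n) : 'rV[K]_n :=
  \sum_(i < n) \sum_(j < n) (u 0 i * v 0 j) *: c i j.

(* 3-dimensional EACP with natural basis h_1 = e_0, h_2 = e_1, r = e_2
   (the basis vector h_j for j : 'I_2 is e_(lift ord_max j)). *)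
Definition eacp_hr (K : fieldType) (a : 'I_2 -> 'I_2 -> K) (b : 'I_2 -> K)
    (i : 'I_2) : 'rV[K]_3 :=
  2^-1 *: (\sum_(j < 2) a i j *: ebasis (lift ord_max j) + b i *: ebasis ord_max).

Definition eacp3 (K : fieldType) (a : 'I_2 -> 'I_2 -> K) (b : 'I_2 -> K) : strc K 3 :=
  fun i j =>
    match unlift ord_max i, unlift ord_max j with
    | Some i', None => eacp_hr a b i'   (* h_i r *)
    | None, Some j' => eacp_hr a b j'   (* r h_j *)
    | _, _ => 0                          (* h_i h_j = 0, r r = 0 *)
    end.

Definition sq_dim1 (K : fieldType) (n : nat) (c : strc K n) : Prop :=
  exists w : 'rV[K]_n, w != 0 /\
    (forall x y, exists k : K, mulS c x y = k *: w) /\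
    (exists x y, mulS c x y != 0).

Definition alg_iso (K : fieldType) (n : nat) (c d : strc K n) : Prop :=
  exists f : 'M[K]_n, f \in unitmx /\
    forall x y, mulS d (x *m f) (y *m f) = mulS c x y *m f.

(* the algebra with h_1 r = r h_1 = w (indices: h_1 = 0, h_2 = 1, r = 2),
   all other basis products zero *)
Definition h1r_alg (K : fieldType) (w : 'rV[K]_3) : strc K 3 :=
  fun i j =>
    if ((val i == 0%N) && (val j == 2%N)) || ((val i == 2%N) && (val j == 0%N))
    then w else 0.

Definition h1 (K : fieldType) : 'rV[K]_3 := @ebasis K 3 0.
Definition h2 (K : fieldType) : 'rV[K]_3 := @ebasis K 3 1.
Definition rr (K : fieldType) : 'rV[K]_3 := @ebasis K 3 2.

Definition C1 (K : fieldType) : strc K 3 := h1r_alg (rr K).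
Definition C2 (K : fieldType) : strc K 3 := h1r_alg (h2 K).
Definition C3 (K : fieldType) : strc K 3 := h1r_alg (h1 K + rr K).

From HB Require Import structures.
From mathcomp Require Import all_boot all_order all_algebra.
From mathcomp Require Import ring.
Set Implicit Arguments. Unset Strict Implicit. Unset Printing Implicit Defensive.
Import GRing.Theory.
Local Open Scope ring_scope.

(* Every product in an EACP is [B_1(x,y) (h_1 r) + B_2(x,y) (h_2 r)] with
   [B_i(x,y) = x_i y_r + x_r y_i].  If [C^2 = K w], then [h_i r = k_i w], and the
   coordinate change [x_1 |-> k_1 x_1 + k_2 x_2] makes [C] the algebra in which
   [h_1 r = r h_1 = w] is the only nonzero product.  Writing
   [w = p h_1 + q h_2 + s r], a further change of basis normalizes [w] to
   [h_2] (when [p = s = 0]), to [r] (when exactly one of [p], [s] vanishes) or to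
   [h_1 + r] (when [p s != 0]).  The three normal forms are told apart by the
   isomorphism invariants [C^2 C = 0] (only [C_2]) and [C^2 C^2 = 0] (not [C_3],
   where [(h_1 r)^2 = 2 (h_1 r)] since [char K != 2]). *)

Definition i0 : 'I_3 := @Ordinal 3 0 isT.
Definition i1 : 'I_3 := @Ordinal 3 1 isT.
Definition i2 : 'I_3 := @Ordinal 3 2 isT.

Lemma ord3P (P : 'I_3 -> Prop) : P i0 -> P i1 -> P i2 -> forall j, P j.
Proof.
move=> P0 P1 P2 [[|[|[|j]]] lt_j3] //.
- by rewrite (_ : Ordinal lt_j3 = i0) //; apply: val_inj.
- by rewrite (_ : Ordinal lt_j3 = i1) //; apply: val_inj.
- by rewrite (_ : Ordinal lt_j3 = i2) //; apply: val_inj.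
Qed.

Lemma big_ord3 (V : nmodType) (F : 'I_3 -> V) :
  \sum_(i < 3) F i = F i0 + F i1 + F i2.
Proof.
rewrite !big_ord_recr big_ord0 /= add0r.
by congr (_ + _ + _); congr (F _); apply: val_inj.
Qed.

Lemma mulmx3E (K : fieldType) m n (A : 'M[K]_(m, 3)) (B : 'M[K]_(3, n)) i j :
  (A *m B) i j = A i i0 * B i0 j + A i i1 * B i1 j + A i i2 * B i2 j.
Proof. by rewrite mxE big_ord3. Qed.

Lemma ebasisE (K : fieldType) (k j : 'I_3) :
  (ebasis k : 'rV[K]_3) 0 j = (val j == val k)%:R.
Proof. by rewrite /ebasis mxE eqxx. Qed.

Definition M3 (K : fieldType) (l : seq (seq K)) : 'M[K]_3 :=
  \matrix_(i, j) nth 0 (nth [::] l i) j.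

Lemma M3_unit (K : fieldType) (l l' : seq (seq K)) :
  (forall i j, (M3 l *m M3 l') i j = (i == j)%:R) -> M3 l \in unitmx.
Proof.
move=> ll'1; have [] // := @mulmx1_unit _ _ (M3 l) (M3 l').
by apply/matrixP=> i j; rewrite ll'1 mxE.
Qed.

Ltac M3_inverse :=
  let i := fresh "i" in let j := fresh "j" in
  move=> i j; rewrite mulmx3E !mxE; move: i j;
  apply: ord3P; apply: ord3P => /=; field.

Section Isomorphism.

Variables (K : fieldType) (n : nat).
Implicit Types c d e : strc K n.

Lemma alg_iso_trans c d e : alg_iso c d -> alg_iso d e -> alg_iso c e.
Proof.
move=> [f [f_unit fM]] [g [g_unit gM]]; exists (f *m g).
by split=> [|x y]; rewrite ?unitmx_mul ?f_unit // !mulmxA gM fM.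
Qed.

Lemma alg_iso_sym c d : alg_iso c d -> alg_iso d c.
Proof.
move=> [f [f_unit fM]]; exists (invmx f); split=> [|x y]; first by rewrite unitmx_inv.
by have := fM (x *m invmx f) (y *m invmx f); rewrite !mulmxKV // => ->; rewrite mulmxK.
Qed.

Definition sqr_mul0 c := forall x y z, mulS c (mulS c x y) z = 0.
Definition sqr_sqr0 c := forall x y u v, mulS c (mulS c x y) (mulS c u v) = 0.

Lemma alg_iso_sqr_mul0 c d : alg_iso c d -> sqr_mul0 c -> sqr_mul0 d.
Proof.
move=> [f [f_unit fM]] c0 x y z.
by rewrite -[x](mulmxKV f_unit) -[y](mulmxKV f_unit) -[z](mulmxKV f_unit)
  !fM c0 mul0mx.
Qed.

Lemma alg_iso_sqr_sqr0 c d : alg_iso c d -> sqr_sqr0 c -> sqr_sqr0 d.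
Proof.
move=> [f [f_unit fM]] c0 x y u v.
by rewrite -[x](mulmxKV f_unit) -[y](mulmxKV f_unit) -[u](mulmxKV f_unit)
  -[v](mulmxKV f_unit) !fM c0 mul0mx.
Qed.

End Isomorphism.

Section ThreeDimensional.

Variable K : fieldType.
Implicit Types (w t x y : 'rV[K]_3) (f : 'M[K]_3).

Definition hr_form (i : 'I_3) x y := x 0 i * y 0 i2 + x 0 i2 * y 0 i.

Lemma mulS_h1r_alg w x y : mulS (h1r_alg w) x y = hr_form i0 x y *: w.
Proof. by rewrite /mulS !big_ord3 /h1r_alg /= !scaler0 !addr0 !add0r scalerDl. Qed.

Lemma mulS_eacp3 a b x y :
  mulS (eacp3 a b) x y =
    hr_form i0 x y *: eacp_hr a b ord0 + hr_form i1 x y *: eacp_hr a b ord_max.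
Proof.
have unlift0 : unlift (@ord_max 2) i0 = Some (ord0 : 'I_2).
  by rewrite (_ : i0 = lift ord_max ord0) ?liftK //; apply: val_inj.
have unlift1 : unlift (@ord_max 2) i1 = Some (ord_max : 'I_2).
  by rewrite (_ : i1 = lift ord_max ord_max) ?liftK //; apply: val_inj.
have unlift2 : unlift (@ord_max 2) i2 = None.
  by rewrite (_ : i2 = ord_max) ?unlift_none //; apply: val_inj.
rewrite /mulS !big_ord3 /eacp3 unlift0 unlift1 unlift2.
by rewrite !scaler0 !addr0 !add0r !scalerDl addrACA.
Qed.

Lemma alg_iso_h1r_alg (c : strc K 3) (S : 'rV[K]_3 -> 'rV[K]_3 -> K)
    (w t : 'rV[K]_3) f (k : K) :
  f \in unitmx -> (forall x y, mulS c x y = S x y *: w) -> w *m f = k *: t ->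
  (forall x y, hr_form i0 (x *m f) (y *m f) = k * S x y) ->
  alg_iso c (h1r_alg t).
Proof.
move=> f_unit cE wf formf; exists f; split=> // x y.
by rewrite mulS_h1r_alg formf cE -scalemxAl wf scalerA mulrC.
Qed.

Lemma mulmx_neq0 w f : f \in unitmx -> w != 0 -> w *m f != 0.
Proof.
move=> f_unit; apply: contra => /eqP wf0; apply/eqP.
by rewrite -(mulmxK f_unit w) wf0 mul0mx.
Qed.

Lemma eacp3_iso_h1r_alg a b :
  sq_dim1 (eacp3 a b) -> exists2 w : 'rV[K]_3, w != 0 & alg_iso (eacp3 a b) (h1r_alg w).
Proof.
case=> w [w_neq0 [on_line [x0 [y0 xy0_neq0]]]].
have [k0 hr0] := on_line (h1 K) (rr K).
have [k1 hr1] := on_line (h2 K) (rr K).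
rewrite mulS_eacp3 /hr_form !ebasisE /= in hr0.
rewrite mulS_eacp3 /hr_form !ebasisE /= in hr1.
rewrite !(mul1r, mul0r, mulr0, addr0, add0r, scale1r, scale0r) in hr0 hr1.
have mulE x y : mulS (eacp3 a b) x y =
    (hr_form i0 x y * k0 + hr_form i1 x y * k1) *: w.
  by rewrite mulS_eacp3 hr0 hr1 !scalerA scalerDl.
have [k0_eq0 | k0_neq0] := eqVneq k0 0.
  have k1_neq0 : k1 != 0.
    apply: contraNneq xy0_neq0 => k1_eq0.
    by rewrite mulE k0_eq0 k1_eq0 !mulr0 addr0 scale0r.
  pose f := M3 [:: [:: 0; 1; 0]; [:: k1; 0; 0]; [:: 0; 0; 1]].
  have f_unit : f \in unitmx.
    by apply: (@M3_unit _ _ [:: [:: 0; k1^-1; 0]; [:: 1; 0; 0]; [:: 0; 0; 1]]);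
      M3_inverse.
  exists (w *m f); first exact: mulmx_neq0.
  apply: (alg_iso_h1r_alg (k := 1) f_unit mulE); first by rewrite scale1r.
  by move=> x y; rewrite /hr_form !mulmx3E !mxE /= k0_eq0; ring.
pose f := M3 [:: [:: k0; 0; 0]; [:: k1; 1; 0]; [:: 0; 0; 1]].
have f_unit : f \in unitmx.
  by apply: (@M3_unit _ _ [:: [:: k0^-1; 0; 0]; [:: - k1 / k0; 1; 0]; [:: 0; 0; 1]]);
    M3_inverse.
exists (w *m f); first exact: mulmx_neq0.
apply: (alg_iso_h1r_alg (k := 1) f_unit mulE); first by rewrite scale1r.
by move=> x y; rewrite /hr_form !mulmx3E !mxE /=; ring.
Qed.

Lemma h1r_alg_iso_C2 w : w 0 i0 = 0 -> w 0 i2 = 0 -> w 0 i1 != 0 ->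
  alg_iso (h1r_alg w) (C2 K).
Proof.
set q := w 0 i1 => p0 s0 q_neq0.
pose f := M3 [:: [:: q; 0; 0]; [:: 0; 1; 0]; [:: 0; 0; 1]].
have f_unit : f \in unitmx.
  by apply: (@M3_unit _ _ [:: [:: q^-1; 0; 0]; [:: 0; 1; 0]; [:: 0; 0; 1]]); M3_inverse.
apply: (alg_iso_h1r_alg (k := q) f_unit (@mulS_h1r_alg w)).
  by apply/rowP; apply: ord3P; rewrite mulmx3E !mxE /= -/q ?p0 ?s0; ring.
by move=> x y; rewrite /hr_form !mulmx3E !mxE /=; ring.
Qed.

Lemma h1r_alg_iso_C1_of_h1 w : w 0 i0 != 0 -> w 0 i2 = 0 ->
  alg_iso (h1r_alg w) (C1 K).
Proof.
set p := w 0 i0; set q := w 0 i1 => p_neq0 s0.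
pose f := M3 [:: [:: 0; - q; 1]; [:: 0; p; 0]; [:: p; 0; 0]].
have f_unit : f \in unitmx.
  by apply: (@M3_unit _ _ [:: [:: 0; 0; p^-1]; [:: 0; p^-1; 0]; [:: 1; q / p; 0]]);
    M3_inverse.
apply: (alg_iso_h1r_alg (k := p) f_unit (@mulS_h1r_alg w)).
  by apply/rowP; apply: ord3P; rewrite mulmx3E !mxE /= -/p -/q ?s0; ring.
by move=> x y; rewrite /hr_form !mulmx3E !mxE /=; ring.
Qed.

Lemma h1r_alg_iso_C1_of_r w : w 0 i0 = 0 -> w 0 i2 != 0 ->
  alg_iso (h1r_alg w) (C1 K).
Proof.
set q := w 0 i1; set s := w 0 i2 => p0 s_neq0.
pose f := M3 [:: [:: s; 0; 0]; [:: 0; s; 0]; [:: 0; - q; 1]].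
have f_unit : f \in unitmx.
  by apply: (@M3_unit _ _ [:: [:: s^-1; 0; 0]; [:: 0; s^-1; 0]; [:: 0; q / s; 1]]);
    M3_inverse.
apply: (alg_iso_h1r_alg (k := s) f_unit (@mulS_h1r_alg w)).
  by apply/rowP; apply: ord3P; rewrite mulmx3E !mxE /= -/q -/s ?p0; ring.
by move=> x y; rewrite /hr_form !mulmx3E !mxE /=; ring.
Qed.

Lemma h1r_alg_iso_C3 w : w 0 i0 != 0 -> w 0 i2 != 0 ->
  alg_iso (h1r_alg w) (C3 K).
Proof.
set p := w 0 i0; set q := w 0 i1; set s := w 0 i2 => p_neq0 s_neq0.
pose f := M3 [:: [:: s; 0; 0]; [:: 0; s; 0]; [:: 0; - q; p]].
have f_unit : f \in unitmx.
  by apply: (@M3_unit _ _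
      [:: [:: s^-1; 0; 0]; [:: 0; s^-1; 0]; [:: 0; q / (s * p); p^-1]]);
    M3_inverse; rewrite ?p_neq0 ?s_neq0.
apply: (alg_iso_h1r_alg (k := s * p) f_unit (@mulS_h1r_alg w)).
  by apply/rowP; apply: ord3P; rewrite mulmx3E !mxE /= -/p -/q -/s; ring.
by move=> x y; rewrite /hr_form !mulmx3E !mxE /=; ring.
Qed.

Lemma h1r_alg_classification w : w != 0 ->
  [\/ alg_iso (h1r_alg w) (C1 K), alg_iso (h1r_alg w) (C2 K)
     | alg_iso (h1r_alg w) (C3 K)].
Proof.
move=> w_neq0.
have [p0 | p_neq0] := eqVneq (w 0 i0) 0; have [s0 | s_neq0] := eqVneq (w 0 i2) 0.
- apply: Or32; apply: h1r_alg_iso_C2 => //.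
  apply: contraNneq w_neq0 => q0; apply/eqP/rowP; apply: ord3P; rewrite mxE //.
- by apply: Or31; apply: h1r_alg_iso_C1_of_r.
- by apply: Or31; apply: h1r_alg_iso_C1_of_h1.
- by apply: Or33; apply: h1r_alg_iso_C3.
Qed.

Lemma C2_sqr_mul0 : sqr_mul0 (C2 K).
Proof.
by move=> x y z; rewrite /C2 !mulS_h1r_alg /hr_form !mxE /= !mulr0 !mul0r addr0 scale0r.
Qed.

Lemma C1_sqr_sqr0 : sqr_sqr0 (C1 K).
Proof.
move=> x y u v; rewrite /C1 !mulS_h1r_alg /hr_form !mxE /=.
by rewrite !(mulr0, mul0r, addr0) scale0r.
Qed.

Lemma C1_not_sqr_mul0 : ~ sqr_mul0 (C1 K).
Proof.
move=> /(_ (h1 K) (rr K) (h1 K)) /rowP /(_ i2).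
by rewrite /C1 !mulS_h1r_alg /hr_form !mxE /= !(mulr0, mul0r, mulr1, mul1r, addr0, add0r);
  apply/eqP; rewrite oner_eq0.
Qed.

Lemma C3_not_sqr_mul0 : ~ sqr_mul0 (C3 K).
Proof.
move=> /(_ (h1 K) (rr K) (rr K)) /rowP /(_ i0).
by rewrite /C3 !mulS_h1r_alg /hr_form !mxE /= !(mulr0, mul0r, mulr1, mul1r, addr0, add0r);
  apply/eqP; rewrite oner_eq0.
Qed.

Lemma C3_not_sqr_sqr0 : 2%N \notin [pchar K] -> ~ sqr_sqr0 (C3 K).
Proof.
move=> char2 /(_ (h1 K) (rr K) (h1 K) (rr K)) /rowP /(_ i0).
rewrite /C3 !mulS_h1r_alg /hr_form !mxE /= !(mulr0, mul0r, mulr1, mul1r, addr0, add0r).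
by apply/eqP; move: char2; rewrite inE /= mulr2n.
Qed.

End ThreeDimensional.

Theorem mainTheorem14 (K : fieldType) (a : 'I_2 -> 'I_2 -> K) (b : 'I_2 -> K) :
  2%N \notin [pchar K] ->
  sq_dim1 (eacp3 a b) ->
  (alg_iso (eacp3 a b) (C1 K) \/ alg_iso (eacp3 a b) (C2 K) \/
   alg_iso (eacp3 a b) (C3 K)) /\
  ~ alg_iso (C1 K) (C2 K) /\ ~ alg_iso (C1 K) (C3 K) /\ ~ alg_iso (C2 K) (C3 K).
Proof.
move=> char2 sq1; split; last split; last split.
- have [w w_neq0 iso_w] := eacp3_iso_h1r_alg sq1.
  by case: (h1r_alg_classification w_neq0) => iso_C;
    [left | right; left | right; right]; apply: alg_iso_trans iso_C.
- by move/alg_iso_sym/alg_iso_sqr_mul0/(_ (@C2_sqr_mul0 K)); apply: C1_not_sqr_mul0.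
- by move/alg_iso_sqr_sqr0/(_ (@C1_sqr_sqr0 K)); apply: C3_not_sqr_sqr0.
- by move/alg_iso_sqr_mul0/(_ (@C2_sqr_mul0 K)); apply: C3_not_sqr_mul0.
Qed.
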